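(* Let $E$ be an $AL$-space and let $F$ be a reflexive Banach lattice. Then every order bounded sequentially $uaw$-compact operator $T\colon E\to F$ has a weakly compact modulus $|T|$.
   Context: A net $(x_\alpha)$ in a Banach lattice $G$ is $uaw$-convergent to $x$ if $|x_\alpha-x|\wedge u\to 0$ weakly for every $u\in G_+$. A bounded operator $T\colon X\to G$ from a Banach space into a Banach lattice is sequentially $uaw$-compact if for every bounded sequence $(x_n)$ in $X$, the sequence $(Tx_n)$ has a subsequence that is $uaw$-convergent in $G$. *)

From HB Require Import structures.
From mathcomp Require Import all_boot all_order all_algebra.
From mathcomp Require Import all_classical all_reals all_analysis.
Set Implicit Arguments. Unset Strict Implicit. Unset Printing Implicit Defensive.
Import Order.TTheory GRing.Theory Num.Theory.
Import numFieldNormedType.Exports.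
Local Open Scope classical_set_scope.
Local Open Scope ring_scope.

Section BanachLattice.
Context {R : realType}.

Record banach_lattice (V : completeNormedModType R) := BanachLattice {
  bl_le : V -> V -> Prop;
  bl_join : V -> V -> V;
  bl_le_refl : forall x, bl_le x x;
  bl_le_anti : forall x y, bl_le x y -> bl_le y x -> x = y;
  bl_le_trans : forall x y z, bl_le x y -> bl_le y z -> bl_le x z;
  bl_join_ubl : forall x y, bl_le x (bl_join x y);
  bl_join_ubr : forall x y, bl_le y (bl_join x y);
  bl_join_lub : forall x y z, bl_le x z -> bl_le y z -> bl_le (bl_join x y) z;
  bl_le_add : forall x y z, bl_le x y -> bl_le (x + z) (y + z);
  bl_le_scale : forall (a : R) x, 0 <= a -> bl_le 0 x -> bl_le 0 (a *: x);
  bl_norm_mono : forall x y,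
    bl_le (bl_join x (- x)) (bl_join y (- y)) -> `|x| <= `|y|
}.

Context {V : completeNormedModType R} (L : banach_lattice V).

Definition bl_abs (x : V) : V := bl_join L x (- x).
Definition bl_meet (x y : V) : V := - bl_join L (- x) (- y).

Definition is_dual_elt (f : V -> R) : Prop :=
  [/\ forall x y, f (x + y) = f x + f y,
      forall (a : R) x, f (a *: x) = a * f x
    & continuous f].

Definition weakly_cvg (z : nat -> V) (y : V) : Prop :=
  forall f, is_dual_elt f -> f (z n) @[n --> \oo] --> f y.

Definition uaw_cvg (z : nat -> V) (y : V) : Prop :=
  forall u, bl_le L 0 u -> weakly_cvg (fun n => bl_meet (bl_abs (z n - y)) u) 0.

(** the weak topology sigma(V, V'): initial topology of the evaluation map
    into the product (pointwise) topology on V' -> R *)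
Definition dual_space := {f : V -> R | is_dual_elt f}.
Definition weak_eval (x : V) : {ptws dual_space -> R} := fun f => sval f x.
Definition weakV := initial_topology weak_eval.

Definition rel_weakly_compact (A : set V) : Prop :=
  compact (closure (A : set weakV)).

(** reflexivity: the canonical embedding V -> V'' is onto.  An element of V''
    is a linear functional on V' bounded w.r.t. the dual norm, i.e.
    |phi f| <= C ||f|| whenever ||f|| <= M. *)
Definition reflexive_space : Prop :=
  forall phi : (V -> R) -> R,
    (forall f g, is_dual_elt f -> is_dual_elt g ->
       phi (fun x => f x + g x) = phi f + phi g) ->
    (forall (a : R) f, is_dual_elt f -> phi (fun x => a * f x) = a * phi f) ->
    (exists C : R, forall f (M : R), is_dual_elt f -> 0 <= M ->
       (forall x, `|f x| <= M * `|x|) -> `|phi f| <= C * M) ->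
    exists x : V, forall f, is_dual_elt f -> phi f = f x.

Definition AL_space : Prop :=
  forall x y, bl_le L 0 x -> bl_le L 0 y -> `|x + y| = `|x| + `|y|.

End BanachLattice.
Arguments reflexive_space {R} V.

Section Operators.
Context {R : realType} {E F : completeNormedModType R}.

Definition order_bounded (LE : banach_lattice E) (LF : banach_lattice F) (T : E -> F) : Prop :=
  forall a b, exists c d, forall x, bl_le LE a x -> bl_le LE x b ->
    bl_le LF c (T x) /\ bl_le LF (T x) d.

Definition seq_uaw_compact (LE : banach_lattice E) (LF : banach_lattice F) (T : E -> F) : Prop :=
  forall x : nat -> E, (exists M : R, forall n, `|x n| <= M) ->
    exists phi : nat -> nat, (forall n, (phi n < phi n.+1)%N) /\
      exists y, uaw_cvg LF (fun n => T (x (phi n))) y.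

Definition op_le (LE : banach_lattice E) (LF : banach_lattice F) (T S : E -> F) : Prop :=
  forall x, bl_le LE 0 x -> bl_le LF (T x) (S x).

Definition is_modulus (LE : banach_lattice E) (LF : banach_lattice F) (T S : {linear E -> F}) : Prop :=
  [/\ op_le LE LF T S, op_le LE LF (fun x => - T x) S,
      order_bounded LE LF S &
      forall U : {linear E -> F}, order_bounded LE LF U ->
        op_le LE LF T U -> op_le LE LF (fun x => - T x) U -> op_le LE LF S U].

Definition weakly_compact_op (S : E -> F) : Prop :=
  rel_weakly_compact (S @` [set x : E | `|x| <= 1]).

End Operators.
Arguments weakly_compact_op {R E F} S.

From HB Require Import structures.
From mathcomp Require Import all_boot all_order all_algebra.
From mathcomp Require Import all_classical all_reals all_analysis.
From mathcomp Require Import lra.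
Import Order.TTheory GRing.Theory Num.Theory.
Import numFieldNormedType.Exports.
Local Open Scope classical_set_scope.
Local Open Scope ring_scope.
Set Implicit Arguments. Unset Strict Implicit. Unset Printing Implicit Defensive.

(* A reflexive Banach lattice is Dedekind complete: the finite suprema of an
   order-bounded set form an upward directed, norm-bounded family, which by
   reflexivity and Tychonoff has a weak cluster point; since positive
   functionals determine the order (Hahn-Banach for x |-> ||x^+||), that point
   is the supremum.  Hence the Riesz-Kantorovich formula |T| = 2T^+ - T, with
   T^+ x = sup T[0, x] on the positive cone, gives the modulus of every order
   bounded T.  Positive operators between Banach lattices are norm bounded, so
   |T| maps the unit ball into a norm-bounded set, which is relatively weakly
   compact in the reflexive space F. *)
(** * Order arithmetic in a Banach lattice *)

Lemma scale_half_double {R : numFieldType} {V : lmodType R} (x : V) :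
  (2 : R)^-1 *: (x + x) = x.
Proof.
by rewrite -mulr2n -[x *+ 2]scaler_nat scalerA mulVf ?scale1r // pnatr_eq0.
Qed.

Section BanachLatticeTheory.
Context {R : realType} {V : completeNormedModType R} (L : banach_lattice V).
Local Notation "x ⊑ y" := (bl_le L x y) (at level 70).
Local Notation "x ⊔ y" := (bl_join L x y) (at level 50).
#[local] Hint Resolve bl_le_refl bl_join_ubl bl_join_ubr : core.

Lemma bl_leD2r x y z : x + z ⊑ y + z <-> x ⊑ y.
Proof.
split=> [/(bl_le_add (- z))|]; last exact: bl_le_add.
by rewrite !addrK.
Qed.

Lemma bl_leD2l x y z : z + x ⊑ z + y <-> x ⊑ y.
Proof. by rewrite ![z + _]addrC bl_leD2r. Qed.

Lemma bl_leD a b c d : a ⊑ b -> c ⊑ d -> a + c ⊑ b + d.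
Proof.
by move=> ab cd; apply: bl_le_trans (bl_le_add c ab) _; apply/bl_leD2l.
Qed.

Lemma bl_addr_ge0 x y : 0 ⊑ x -> 0 ⊑ y -> 0 ⊑ x + y.
Proof. by move=> x0 y0; rewrite -[X in X ⊑ _](addr0 0); apply: bl_leD. Qed.

Lemma bl_subr_ge0 x y : 0 ⊑ y - x <-> x ⊑ y.
Proof. by rewrite -(bl_leD2r _ _ x) add0r subrK. Qed.

Lemma bl_lerBrDr x y z : x ⊑ y - z <-> x + z ⊑ y.
Proof. by rewrite -(bl_leD2r _ _ z) subrK. Qed.

Lemma bl_lerBlDr x y z : x - z ⊑ y <-> x ⊑ y + z.
Proof. by rewrite -(bl_leD2r _ _ z) subrK. Qed.

Lemma bl_leN2 x y : - x ⊑ - y <-> y ⊑ x.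
Proof. by rewrite -bl_subr_ge0 opprK addrC bl_subr_ge0. Qed.

Lemma bl_leZ2l {a : R} {x y} : 0 <= a -> x ⊑ y -> a *: x ⊑ a *: y.
Proof.
by move=> a0 /bl_subr_ge0 xy; apply/bl_subr_ge0; rewrite -scalerBr; apply: bl_le_scale.
Qed.

Lemma bl_le_half x y : x ⊑ (2 : R)^-1 *: y <-> x + x ⊑ y.
Proof.
have two0 : (0 : R) <= 2 by [].
have half0 : (0 : R) <= 2^-1 by rewrite invr_ge0.
split=> [/(bl_leZ2l two0)|/(bl_leZ2l half0)].
  by rewrite scalerA divff ?pnatr_eq0 // scale1r scaler_nat mulr2n.
by rewrite scale_half_double.
Qed.

Lemma bl_joinC x y : x ⊔ y = y ⊔ x.
Proof. by apply: bl_le_anti; apply: bl_join_lub. Qed.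

Lemma bl_join_r x y : x ⊑ y -> x ⊔ y = y.
Proof.
by move=> xy; apply: bl_le_anti => //; apply: bl_join_lub.
Qed.

Lemma bl_joinxx x : x ⊔ x = x.
Proof. exact/bl_join_r/bl_le_refl. Qed.

Lemma bl_joinDl x y z : (x ⊔ y) + z = (x + z) ⊔ (y + z).
Proof.
apply: bl_le_anti; last by apply: bl_join_lub; apply/bl_leD2r.
rewrite -(bl_leD2r _ _ (- z)) addrK.
by apply: bl_join_lub; rewrite -(bl_leD2r _ _ z) subrK.
Qed.

Lemma bl_joinZ (a : R) x y : 0 < a -> a *: (x ⊔ y) = (a *: x) ⊔ (a *: y).
Proof.
move=> a_gt0; have a_ge0 := ltW a_gt0; have a_neq0 : a != 0 by rewrite gt_eqF.
have ai_ge0 : 0 <= a^-1 by rewrite invr_ge0.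
apply: bl_le_anti; last by apply: bl_join_lub; apply: bl_leZ2l.
rewrite -[X in _ ⊑ X](scalerKV a_neq0); apply: bl_leZ2l => //.
by apply: bl_join_lub; rewrite -[X in X ⊑ _](scalerK a_neq0); apply: bl_leZ2l.
Qed.

Lemma bl_meet_lbl x y : bl_meet L x y ⊑ x.
Proof. by rewrite -bl_leN2 opprK. Qed.

Lemma bl_meet_lbr x y : bl_meet L x y ⊑ y.
Proof. by rewrite -bl_leN2 opprK. Qed.

Lemma bl_meet_glb x y z : z ⊑ x -> z ⊑ y -> z ⊑ bl_meet L x y.
Proof. by move=> zx zy; rewrite -bl_leN2 opprK; apply: bl_join_lub; apply/bl_leN2. Qed.

Definition bl_pos x := x ⊔ 0.
Definition bl_neg x := bl_pos (- x).

Lemma bl_pos_ge0 x : 0 ⊑ bl_pos x. Proof. exact: bl_join_ubr. Qed.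

Lemma bl_neg_ge0 x : 0 ⊑ bl_neg x. Proof. exact: bl_pos_ge0. Qed.

Lemma bl_pos_ge x : x ⊑ bl_pos x. Proof. exact: bl_join_ubl. Qed.

Lemma bl_pos_sub_neg x : bl_pos x - bl_neg x = x.
Proof.
suff <- : bl_pos x - x = bl_neg x by rewrite opprB addrC subrK.
by rewrite /bl_pos bl_joinDl subrr add0r bl_joinC.
Qed.

Lemma bl_posD_le x y : bl_pos (x + y) ⊑ bl_pos x + bl_pos y.
Proof.
by apply: bl_join_lub; [apply: bl_leD|apply: bl_addr_ge0]; rewrite /bl_pos.
Qed.

Lemma bl_posZ (a : R) x : 0 <= a -> bl_pos (a *: x) = a *: bl_pos x.
Proof.
rewrite le_eqVlt => /predU1P[<-|a0]; first by rewrite !scale0r /bl_pos bl_joinxx.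
by rewrite /bl_pos bl_joinZ // scaler0.
Qed.

Lemma bl_neg_eq0 x : bl_neg x = 0 -> 0 ⊑ x.
Proof. by move=> nx0; rewrite -bl_leN2 oppr0 -nx0; apply: bl_pos_ge. Qed.

Lemma bl_abs_ge x : x ⊑ bl_abs L x. Proof. exact: bl_join_ubl. Qed.

Lemma bl_abs_geN x : - x ⊑ bl_abs L x. Proof. exact: bl_join_ubr. Qed.
#[local] Hint Resolve bl_abs_ge bl_abs_geN : core.

Lemma bl_abs_ge0 x : 0 ⊑ bl_abs L x.
Proof.
rewrite -(scale_half_double (bl_abs L x)); apply: bl_le_scale; first by rewrite invr_ge0.
by rewrite -(subrr x); apply: bl_leD.
Qed.

Lemma bl_abs_id x : 0 ⊑ x -> bl_abs L x = x.
Proof.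
move=> x0; rewrite /bl_abs bl_joinC bl_join_r //.
by apply: (bl_le_trans _ x0); rewrite -oppr0 bl_leN2.
Qed.

Lemma norm_bl_abs x : `|bl_abs L x| = `|x|.
Proof.
have absK : bl_abs L (bl_abs L x) = bl_abs L x := bl_abs_id (bl_abs_ge0 x).
by apply/eqP; rewrite eq_le !(@bl_norm_mono _ _ L) // -/(bl_abs L _) absK.
Qed.

Lemma bl_norm_le x y : 0 ⊑ x -> x ⊑ y -> `|x| <= `|y|.
Proof.
move=> x0 xy; apply: (@bl_norm_mono _ _ L).
change (bl_abs L x ⊑ bl_abs L y).
by rewrite !bl_abs_id //; apply: bl_le_trans xy.
Qed.

Lemma norm_bl_pos_le x : `|bl_pos x| <= `|x|.
Proof.
rewrite -(norm_bl_abs x); apply: bl_norm_le; first exact: bl_pos_ge0.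
by apply: bl_join_lub; [apply: bl_abs_ge|apply: bl_abs_ge0].
Qed.

Lemma norm_bl_neg_le x : `|bl_neg x| <= `|x|.
Proof. by rewrite -(normrN x) norm_bl_pos_le. Qed.

Lemma bl_norm_interval_le a b x : a ⊑ x -> x ⊑ b -> `|x| <= `|bl_abs L a + bl_abs L b|.
Proof.
move=> ax xb; rewrite -(norm_bl_abs x); apply: bl_norm_le; first exact: bl_abs_ge0.
apply: bl_join_lub; [apply: bl_le_trans xb _|apply: bl_le_trans (_ : - x ⊑ - a) _].
- by rewrite -[X in X ⊑ _]add0r; apply: bl_leD => //; apply: bl_abs_ge0.
- by rewrite bl_leN2.
- by rewrite -[X in X ⊑ _]addr0; apply: bl_leD => //; apply: bl_abs_ge0.
Qed.

Lemma bl_riesz_decomposition y x1 x2 : 0 ⊑ x1 -> 0 ⊑ x2 -> 0 ⊑ y -> y ⊑ x1 + x2 ->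
  exists y1 y2, [/\ y = y1 + y2, 0 ⊑ y1, y1 ⊑ x1, 0 ⊑ y2 & y2 ⊑ x2].
Proof.
move=> x10 x20 y0 yx; exists (bl_meet L y x1), (y - bl_meet L y x1); split.
- by rewrite addrC subrK.
- exact: bl_meet_glb.
- exact: bl_meet_lbr.
- by apply/bl_subr_ge0; apply: bl_meet_lbl.
rewrite /bl_meet opprK addrC bl_joinDl addNr bl_joinC.
apply: bl_join_lub => //; rewrite -bl_subr_ge0 opprD opprK addrA addrC.
by rewrite (addrC x2) addrC bl_subr_ge0.
Qed.

Lemma bl_ge_closed a : closed [set x : V | a ⊑ x].
Proof.
move=> x clx; apply/bl_subr_ge0/bl_neg_eq0.
have [//|nz] := eqVneq (bl_neg (x - a)) 0; exfalso.
have e_gt0 : 0 < `|bl_neg (x - a)| by rewrite normr_gt0.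
have [c /= [ac]] := clx _ (nbhsx_ballx x _ e_gt0).
rewrite -ball_normE /= => xc.
have ca : bl_neg (x - a) ⊑ bl_neg (x - c).
  have ac0 : bl_pos (a - c) = 0.
    by apply: bl_join_r; rewrite -bl_subr_ge0 sub0r opprB bl_subr_ge0.
  have := bl_posD_le (a - c) (c - x); rewrite addrA subrK ac0 add0r.
  by rewrite /bl_neg !opprB.
have := le_lt_trans (le_trans (bl_norm_le (bl_neg_ge0 _) ca) (norm_bl_neg_le _)) xc.
by rewrite ltxx.
Qed.

End BanachLatticeTheory.

#[local] Hint Resolve bl_le_refl bl_join_ubl bl_join_ubr bl_pos_ge0 bl_neg_ge0 : core.

(** * Hahn-Banach extension *)

Section HahnBanach.
Context {R : realType} {V : lmodType R} (p : V -> R).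
Hypothesis p_subadd : forall x y, p (x + y) <= p x + p y.
Hypothesis p_posZ : forall (a : R) x, 0 <= a -> p (a *: x) = a * p x.

Definition linear_subspace (D : set V) :=
  [/\ D 0, forall x y, D x -> D y -> D (x + y) & forall (a : R) x, D x -> D (a *: x)].

Definition dominated_on (D : set V) (g : V -> R) :=
  [/\ linear_subspace D,
      forall x y, D x -> D y -> g (x + y) = g x + g y,
      forall (a : R) x, D x -> g (a *: x) = a * g x
    & forall x, D x -> g x <= p x].

Definition line_ext (D : set V) x := [set y + t *: x | y in D & t in [set: R]].

Lemma line_ext_uniq (D : set V) x y y' (t t' : R) : linear_subspace D -> ~ D x ->
  D y -> D y' -> y + t *: x = y' + t' *: x -> y = y' /\ t = t'.
Proof.
move=> [_ Dadd DZ] Dx Dy Dy' e.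
suff tt' : t = t' by split=> //; subst t'; apply: addIr e.
apply/eqP; apply: contra_notT Dx => tt'.
have -> : x = (t - t')^-1 *: (y' - y).
  rewrite -(scalerK (_ : t - t' != 0) x) ?subr_eq0 //; congr (_ *: _).
  by rewrite scalerBl -[t *: x](addKr y) e addrA addrK addrC.
by apply/DZ/Dadd => //; rewrite -scaleN1r; apply: DZ.
Qed.

Lemma dominated_line_ext D g x (a : R) : dominated_on D g -> ~ D x ->
  (forall y (t : R), D y -> g y + t * a <= p (y + t *: x)) ->
  exists g', [/\ dominated_on (line_ext D x) g', (forall y, D y -> g' y = g y) & g' x = a].
Proof.
move=> [[D0 Dadd DZ] gD gZ gp] Dx ga.
pose dec w := xget (0 : V, 0 : R) [set yt | D yt.1 /\ w = yt.1 + yt.2 *: x].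
have decE y t : D y -> dec (y + t *: x) = (y, t).
  move=> Dy; have : [set yt | D yt.1 /\ y + t *: x = yt.1 + yt.2 *: x] (dec (y + t *: x)).
    by apply: xgetPex; exists (y, t).
  case: (dec _) => y' t' /= [Dy' e].
  by have [-> ->] := line_ext_uniq (And3 D0 Dadd DZ) Dx Dy Dy' e.
pose g' w := g (dec w).1 + (dec w).2 * a.
have g'E y t : D y -> g' (y + t *: x) = g y + t * a by move=> Dy; rewrite /g' decE.
have g0 : g 0 = 0 by rewrite -(scale0r 0) gZ ?mul0r.
exists g'; split; first split.
- split.
  + by exists 0 => //; exists 0 => //; rewrite scale0r addr0.
  + move=> _ _ [y1 Dy1 [t1 _ <-]] [y2 Dy2 [t2 _ <-]].
    by exists (y1 + y2); [exact: Dadd|exists (t1 + t2); rewrite // scalerDl addrACA].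
  + move=> b _ [y Dy [t _ <-]].
    by exists (b *: y); [exact: DZ|exists (b * t); rewrite // scalerDr scalerA].
- move=> _ _ [y1 Dy1 [t1 _ <-]] [y2 Dy2 [t2 _ <-]].
  have Dy := Dadd _ _ Dy1 Dy2.
  by rewrite addrACA -scalerDl !g'E ?gD // mulrDl addrACA.
- move=> b _ [y Dy [t _ <-]].
  have Dby := DZ b _ Dy.
  by rewrite scalerDr scalerA !g'E ?gZ // mulrDr mulrA.
- by move=> _ [y Dy [t _ <-]]; rewrite g'E //; apply: ga.
- by move=> y Dy; have := g'E y 0 Dy; rewrite scale0r mul0r !addr0.
- by have := g'E 0 1 D0; rewrite scale1r add0r g0 mul1r add0r.
Qed.

(* Any value between sup_y (g y - p (y - x)) and inf_z (p (z + x) - g z) works;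
   the sup is taken. *)
Lemma dominated_line_value D g x : dominated_on D g ->
  exists a : R, forall y (t : R), D y -> g y + t * a <= p (y + t *: x).
Proof.
move=> [[D0 Dadd DZ] gD gZ gp].
have gVZ (s : R) y : 0 < s -> D y -> s * g (s^-1 *: y) = g y.
  by move=> s_gt0 Dy; rewrite gZ // mulrA divff ?gt_eqF // mul1r.
have pVZ (s : R) y z : 0 < s -> s * p (s^-1 *: y + z) = p (y + s *: z).
  by move=> s_gt0; rewrite -p_posZ ?ltW // scalerDr scalerA divff ?gt_eqF // scale1r.
pose lo := [set g y - p (y - x) | y in D].
have lo_hi y z : D y -> D z -> g y - p (y - x) <= p (z + x) - g z.
  move=> Dy Dz; have := gp _ (Dadd _ _ Dy Dz); rewrite gD //.
  have := p_subadd (y - x) (z + x); rewrite addrACA addNr addr0; lra.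
have lo_ub : has_ubound lo by exists (p (0 + x) - g 0) => _ [y Dy <-]; apply: lo_hi.
have lo_n0 : lo !=set0 by exists (g 0 - p (0 - x)), 0.
exists (sup lo) => y t Dy.
have [t_lt0|t_gt0|->] := ltrgtP t 0; last by rewrite mul0r scale0r !addr0 gp.
- have s_gt0 : 0 < - t by rewrite oppr_gt0.
  have : g ((- t)^-1 *: y) - p ((- t)^-1 *: y - x) <= sup lo.
    by apply: ub_le_sup => //; exists ((- t)^-1 *: y) => //; apply: DZ.
  by rewrite -(ler_pM2l s_gt0) mulrBr gVZ // pVZ // scaleNr scalerN opprK; lra.
- have : sup lo <= p (t^-1 *: y + x) - g (t^-1 *: y).
    by apply: ge_sup => // _ [z Dz <-]; apply: lo_hi => //; apply: DZ.
  by rewrite -(ler_pM2l t_gt0) mulrBr gVZ // pVZ //; lra.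
Qed.

Definition ext_le (s t : set V * (V -> R)) :=
  s.1 `<=` t.1 /\ forall x, s.1 x -> t.2 x = s.2 x.

Section MaximalExtension.
Variables (D0 : set V) (g0 : V -> R).
Hypothesis g0_dom : dominated_on D0 g0.

Definition dominated_ext :=
  {s : set V * (V -> R) | dominated_on s.1 s.2 /\ ext_le (D0, g0) s}.

Definition dominated_ext_le : rel dominated_ext :=
  fun s t => `[< ext_le (sval s) (sval t) >].

Let base : dominated_ext :=
  exist _ (D0, g0) (conj g0_dom (conj (@subset_refl _ D0) (fun=> fun=> erefl))).

Lemma dominated_ext_chain_ub (A : set dominated_ext) : total_on A dominated_ext_le ->
  exists t, forall s, A s -> dominated_ext_le s t.
Proof.
move=> Atot; have [[a Aa]|noA] := pselect (exists a, A a); last first.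
  by exists base => s As; case: noA; exists s.
have join s1 s2 : A s1 -> A s2 ->
    exists2 s, A s & (sval s1).1 `<=` (sval s).1 /\ (sval s2).1 `<=` (sval s).1.
  move=> A1 A2; have [/asboolP[s12 _]|/asboolP[s21 _]] := Atot s1 s2 A1 A2.
  - by exists s2 => //; split.
  - by exists s1 => //; split.
pose DU x := exists s, A s /\ (sval s).1 x.
pose gU x := if pselect (DU x) is left h then (sval (projT1 (cid h))).2 x else 0.
have gUE s x : A s -> (sval s).1 x -> gU x = (sval s).2 x.
  move=> As Dx; rewrite /gU; case: pselect => [h|]; last by case; exists s.
  case: (cid h) => s' /= [As' Dx'].
  by have [/asboolP[_ ->]|/asboolP[_ ->]] := Atot s s' As As'.
have [[[Da0 _ _] _ _ _] [D0a ga]] := svalP a.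
have UD : dominated_on DU gU.
  split; first split.
  - by exists a.
  - move=> x y [s1 [A1 D1]] [s2 [A2 D2]]; have [s As [s1s s2s]] := join _ _ A1 A2.
    have [[[_ Dadd _] _ _ _] _] := svalP s.
    by exists s; split => //; apply: Dadd; [apply: s1s|apply: s2s].
  - move=> b x [s [As Dx]]; have [[[_ _ DZ] _ _ _] _] := svalP s.
    by exists s; split => //; apply: DZ.
  - move=> x y [s1 [A1 D1]] [s2 [A2 D2]]; have [s As [s1s s2s]] := join _ _ A1 A2.
    have [[[_ Dadd _] gD _ _] _] := svalP s.
    have [Dx Dy] := (s1s _ D1, s2s _ D2).
    by rewrite !(gUE s) ?gD //; apply: Dadd.
  - move=> b x [s [As Dx]]; have [[[_ _ DZ] _ gZ _] _] := svalP s.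
    by rewrite !(gUE s) ?gZ //; apply: DZ.
  - by move=> x [s [As Dx]]; have [[_ _ _ gp] _] := svalP s; rewrite (gUE s) ?gp.
have Ubase : ext_le (D0, g0) (DU, gU).
  split=> [x D0x|x D0x /=]; first by exists a; split; last apply: D0a.
  by rewrite (gUE a) ?ga //; apply: D0a.
exists (exist _ (DU, gU) (conj UD Ubase)) => s As; apply/asboolP.
by split=> [x Dx|x Dx /=]; [exists s|rewrite (gUE s)].
Qed.

Lemma dominated_ext_premaximal_total m : premaximal dominated_ext_le m -> (sval m).1 = setT.
Proof.
move=> mmax; apply/seteqP; split=> // x _; apply/not_notP => Dx.
have [dm [D0m gm]] := svalP m.
have [a ha] := dominated_line_value x dm.
have [g' [g'dom g'm g'x]] := dominated_line_ext dm Dx ha.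
have mD : (sval m).1 `<=` line_ext (sval m).1 x.
  by move=> y Dy; exists y => //; exists 0 => //; rewrite scale0r addr0.
have m'base : ext_le (D0, g0) (line_ext (sval m).1 x, g').
  by split=> [y /D0m /mD //|y D0y /=]; rewrite g'm ?gm //; apply: D0m.
pose m' : dominated_ext := exist _ (line_ext (sval m).1 x, g') (conj g'dom m'base).
have /asboolP[m'm _] := mmax m' (asboolT (conj mD g'm)); apply/Dx/m'm.
have [[Dm0 _ _] _ _ _] := dm.
by exists 0 => //; exists 1 => //; rewrite scale1r add0r.
Qed.

Theorem hahn_banach : exists f : V -> R,
  [/\ forall x y, f (x + y) = f x + f y, forall (a : R) x, f (a *: x) = a * f x,
      forall x, f x <= p x & forall x, D0 x -> f x = g0 x].
Proof.
have [m mmax] : exists m, premaximal dominated_ext_le m.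
  apply: (ZL_preorder base) => [s|r s t /asboolP[rs1 rs2] /asboolP[st1 st2]|].
  - by apply/asboolP; split.
  - by apply/asboolP; split=> [x /rs1 /st1 //|x rx]; rewrite st2 ?rs2 //; apply: rs1.
  - exact: dominated_ext_chain_ub.
have [[_ gD gZ gp] [_ gm]] := svalP m.
have mT := dominated_ext_premaximal_total mmax.
by exists (sval m).2; split=> [x y|a x|x|x /gm //]; rewrite ?(gD, gZ, gp) ?mT.
Qed.

End MaximalExtension.

Corollary hahn_banach_point v0 (c : R) : (forall t : R, t * c <= p (t *: v0)) ->
  exists f : V -> R,
  [/\ forall x y, f (x + y) = f x + f y, forall (a : R) x, f (a *: x) = a * f x,
      forall x, f x <= p x & f v0 = c].
Proof.
move=> hc; have p0 : p 0 = 0 by rewrite -(scale0r 0) p_posZ // mul0r.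
have zero_dom : dominated_on [set 0] (fun=> 0).
  split; [split|move=> x y _ _|move=> a x _|move=> x ->].
  - by [].
  - by move=> x y -> ->; rewrite addr0.
  - by move=> a x ->; rewrite scaler0.
  - by rewrite addr0.
  - by rewrite mulr0.
  - by rewrite p0.
have [v0_eq0|v0_neq0] := eqVneq v0 0.
  have [f [fD fZ fp _]] := hahn_banach zero_dom.
  have c0 : c = 0 by have := hc 1; have := hc (-1); rewrite v0_eq0 !scaler0 p0; lra.
  by exists f; split; rewrite // v0_eq0 c0 -(scale0r 0) fZ mul0r.
have v0_out : ~ [set 0] v0 by move=> /eqP; rewrite (negbTE v0_neq0).
have line_ok y t : [set 0] y -> 0 + t * c <= p (y + t *: v0).
  by move=> ->; rewrite !add0r; apply: hc.
have [g [g_dom _ gv0]] := dominated_line_ext zero_dom v0_out line_ok.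
have [f [fD fZ fp fg]] := hahn_banach g_dom.
exists f; split; rewrite // fg //.
by exists 0 => //; exists 1 => //; rewrite scale1r add0r.
Qed.

End HahnBanach.

(** * Weak compactness in reflexive spaces *)

Lemma closed_fun_le {T : topologicalType} {R : realType} (h k : T -> R) :
  continuous h -> continuous k -> closed [set x | h x <= k x].
Proof.
move=> hc kc; have -> : [set x | h x <= k x] = (k - h : T -> R^o) @^-1` [set t | 0 <= t].
  by apply/seteqP; split=> x /=; rewrite subr_ge0.
have kh_cont : continuous (k - h : T -> R^o).
  by move=> x; apply: (@continuousB _ R^o _ k h x (kc x) (hc x)).
by apply: (proj1 (continuous_closedP _) kh_cont); apply: closed_ge.
Qed.

Lemma closed_fun_eq {T : topologicalType} {R : realType} (h k : T -> R) :
  continuous h -> continuous k -> closed [set x | h x = k x].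
Proof.
move=> hc kc; have -> : [set x | h x = k x] = [set x | h x <= k x] `&` [set x | k x <= h x].
  by apply/seteqP; split=> x /=; [move=> ->|case=> *; apply/eqP; rewrite eq_le; apply/andP].
by apply: closedI; apply: closed_fun_le.
Qed.

Lemma closure_sub_closed {T : topologicalType} (A C : set T) :
  closed C -> A `<=` C -> closure A `<=` C.
Proof. by move=> cC AsubC; rewrite (closure_id C).1 //; apply: closureS. Qed.

Lemma cluster_initial {S : choiceType} {T : topologicalType} (f : S -> T)
    (F : set_system (initial_topology f)) {FF : Filter F} x :
  cluster (f @ F) (f x) -> cluster F x.
Proof.
move=> fFx A N FA; rewrite nbhsE => -[B [oB Bx] BN]; case: oB Bx BN => O oO <- Ofx ON.
have fFA : (f @ F) (f @` A) by apply: (@filterS _ _ _ A) => // a Aa; exists a.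
have [z [fAz Oz]] := fFx _ _ fFA (open_nbhs_nbhs (conj oO Ofx)).
by case: fAz Oz => a Aa <- Oa; exists a; split=> //; apply: ON.
Qed.

Section WeakTopology.
Context {R : realType} {V : completeNormedModType R}.
Local Notation weakV := (@weakV R V).
Local Notation Y := {ptws (@dual_space R V) -> R}.

HB.instance Definition _ := gen_eqMixin (@dual_space R V).

Lemma dual_eltN f : is_dual_elt f -> forall x : V, f (- x) = - f x.
Proof. by move=> [_ fZ _] x; rewrite -scaleN1r fZ mulN1r. Qed.

Lemma dual_eltB f : is_dual_elt f -> forall x y : V, f (x - y) = f x - f y.
Proof. by move=> fd x y; case: (fd) => fD _ _; rewrite fD dual_eltN. Qed.

Lemma dual_eltD f g : is_dual_elt f -> is_dual_elt g -> is_dual_elt (fun x : V => f x + g x).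
Proof.
move=> [fD fZ fc] [gD gZ gc]; split=> [x y|a x|x].
- by rewrite fD gD addrACA.
- by rewrite fZ gZ mulrDr.
- by apply: continuousD; [apply: fc|apply: gc].
Qed.

Lemma dual_eltZ (a : R) f : is_dual_elt f -> is_dual_elt (fun x : V => a * f x).
Proof.
move=> [fD fZ fc]; split=> [x y|b x|x].
- by rewrite fD mulrDr.
- by rewrite fZ mulrCA.
- by apply: continuousM; [apply: cst_continuous|apply: fc].
Qed.

Lemma dual_elt_bounded f : is_dual_elt f ->
  exists2 M, 0 <= M & forall y : V, `|f y| <= M * `|y|.
Proof.
move=> [fD fZ fc].
have f_lin : GRing.linear_for (@GRing.scale R R^o) (f : V -> R^o).
  by move=> a x y; rewrite fD fZ.
pose F : {linear V -> R^o} :=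
  HB.pack (f : V -> R^o) (GRing.isLinear.Build R V R^o *:%R (f : V -> R^o) f_lin).
have /linear_bounded_continuous/linear_boundedP[M [_ HM]] : continuous F by [].
exists (`|M| + 1) => [|y]; first by rewrite addr_ge0.
by apply: HM; rewrite (le_lt_trans (ler_norm M)) // ltrDl.
Qed.

Lemma bounded_dual_elt f (k : R) :
  (forall x y : V, f (x + y) = f x + f y) -> (forall (a : R) x, f (a *: x) = a * f x) ->
  (forall x, `|f x| <= k * `|x|) -> is_dual_elt f.
Proof.
move=> fD fZ fk; split=> // x.
have fB y z : f y - f z = f (y - z) by rewrite fD -[- z]scaleN1r fZ mulN1r.
have k_gt0 : 0 < `|k| + 1 by rewrite ltr_wpDl.
have fk' y : `|f y| <= (`|k| + 1) * `|y|.
  by rewrite (le_trans (fk y)) // ler_wpM2r // (le_trans (ler_norm k)) // lerDl.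
apply/(@cvgrPdist_lt _ _ _ (nbhs x)) => e e_gt0; near=> z.
rewrite fB (le_lt_trans (fk' _)) // -ltr_pdivlMl //.
by near: z; apply: cvgr_dist_lt => //; rewrite mulrC divr_gt0.
Unshelve. all: by end_near.
Qed.

Lemma weak_continuous_dual_elt f : is_dual_elt f -> continuous (f : weakV -> R).
Proof.
move=> fd x; have -> : f = proj (exist _ f fd : dual_space) \o weak_eval by [].
by apply: continuous_comp; [apply: initial_continuous|apply: proj_continuous].
Qed.

(* The points whose image in the bidual has norm at most [r]; quantifying over
   all bounds [M] of [f] avoids the dual norm. *)
Definition bidual_ball (r : R) : set V := [set x | forall f M, is_dual_elt f -> 0 <= M ->
  (forall y, `|f y| <= M * `|y|) -> `|f x| <= r * M].

Lemma bidual_ball_norm (r : R) x : `|x| <= r -> bidual_ball r x.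
Proof. by move=> xr f M _ M0 fM; rewrite (le_trans (fM x)) // mulrC ler_wpM2r. Qed.

Lemma bidual_ball_weakly_closed r : closed (bidual_ball r : set weakV).
Proof.
pose D := [set fM : (V -> R) * R | [/\ is_dual_elt fM.1, 0 <= fM.2 &
  forall y, `|fM.1 y| <= fM.2 * `|y|]].
have -> : (bidual_ball r : set weakV) = \bigcap_(fM in D) [set x | `|fM.1 x| <= r * fM.2].
  by apply/seteqP; split=> [x rx [f M] [] /=|x rx f M *]; [apply: rx|apply: (rx (f, M))].
apply: closed_bigI => -[f M] [/= fd _ _]; apply: closed_fun_le; last exact: cst_continuous.
by move=> x; apply: continuous_comp; [apply: weak_continuous_dual_elt|apply: norm_continuous].
Qed.

(* A point of the product over the dual, read as a function on all of V -> R
   (junk value 0 off the dual), the shape of the functionals in [reflexive_space]. *)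
Definition dual_extend (q : Y) (h : V -> R) : R :=
  if pselect (is_dual_elt h) is left hd then q (exist _ h hd) else 0.

Lemma dual_extendE q h (hd : is_dual_elt h) : dual_extend q h = q (exist _ h hd).
Proof. by rewrite /dual_extend; case: pselect => // hd'; rewrite (Prop_irrelevance hd' hd). Qed.

Lemma closure_weak_eval_additive q f g : closure (range (weak_eval : V -> Y)) q ->
  is_dual_elt f -> is_dual_elt g ->
  dual_extend q (fun x => f x + g x) = dual_extend q f + dual_extend q g.
Proof.
move=> clq fd gd.
rewrite (dual_extendE _ (dual_eltD fd gd)) (dual_extendE _ fd) (dual_extendE _ gd).
set i := exist _ _ (dual_eltD fd gd); set j := exist _ f fd; set k := exist _ g gd.
apply: (closure_sub_closed (C := [set q' : Y | q' i = q' j + q' k])) clq => [|_ [x _ <-] //].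
apply: closed_fun_eq; first exact: proj_continuous.
by move=> q'; apply: (@continuousD _ R^o); apply: proj_continuous.
Qed.

Lemma closure_weak_eval_scalable q (a : R) f : closure (range (weak_eval : V -> Y)) q ->
  is_dual_elt f -> dual_extend q (fun x => a * f x) = a * dual_extend q f.
Proof.
move=> clq fd; rewrite (dual_extendE _ (dual_eltZ a fd)) (dual_extendE _ fd).
set i := exist _ _ (dual_eltZ a fd); set j := exist _ f fd.
apply: (closure_sub_closed (C := [set q' : Y | q' i = a * q' j])) clq => [|_ [x _ <-] //].
apply: closed_fun_eq; first exact: proj_continuous.
by move=> q'; apply: continuousM; [apply: cst_continuous|apply: proj_continuous].
Qed.

Definition bidual_coord (r : R) (i : @dual_space R V) : set R := [set t | forall M, 0 <= M ->
  (forall y, `|sval i y| <= M * `|y|) -> `|t| <= r * M].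

Lemma bidual_coord_compact r i : compact (bidual_coord r i).
Proof.
have [M0 M0_ge0 hM0] := dual_elt_bounded (svalP i).
apply: (@subclosed_compact _ _ `[- (r * M0), r * M0]%classic); last 2 first.
- exact: segment_compact.
- by move=> t /(_ M0 M0_ge0 hM0); rewrite set_itvcc /= -ler_norml.
pose D := [set M : R | 0 <= M /\ forall y, `|sval i y| <= M * `|y|].
have -> : bidual_coord r i = \bigcap_(M in D) [set t | `|t| <= r * M].
  by apply/seteqP; split=> [t ti M [? ?]|t ti M *]; [apply: ti|apply: ti].
apply: closed_bigI => M _; apply: closed_fun_le; first exact: norm_continuous.
exact: cst_continuous.
Qed.

Lemma bidual_ball_weakly_compact r : reflexive_space V -> compact (bidual_ball r : set weakV).
Proof.
move=> reflV F FF Fr.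
pose G := (weak_eval : weakV -> Y) @ F.
pose B := [set q : Y | forall i, bidual_coord r i (q i)].
have rB : (bidual_ball r : set V) `<=` weak_eval @^-1` B.
  by move=> x rx i M M0 iM; apply: rx (svalP i) M0 iM.
have GB : G B by exact: filterS rB Fr.
have B_compact : compact B := tychonoff (@bidual_coord_compact r).
have [q [Bq Gq]] := B_compact G (fmap_proper_filter _ _) GB.
have clq : closure (range weak_eval) q.
  have Grange : G (range weak_eval).
    have rT : [set: weakV] `<=` weak_eval @^-1` range weak_eval by move=> x _; exists x.
    exact: filterS rT filterT.
  by move: Gq; rewrite clusterE; apply.
have q_bounded : exists C : R, forall f M, is_dual_elt f -> 0 <= M ->
    (forall y, `|f y| <= M * `|y|) -> `|dual_extend q f| <= C * M.
  by exists r => f M fd M0 fM; rewrite (dual_extendE _ fd); apply: Bq.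
have [x qx] := reflV (dual_extend q) (fun f g fd gd => closure_weak_eval_additive clq fd gd)
  (fun a f fd => closure_weak_eval_scalable a clq fd) q_bounded.
have q_eval : q = weak_eval x.
  by apply: funext => -[f fd]; rewrite /weak_eval /= -qx // (dual_extendE _ fd).
exists x; split; last by apply: cluster_initial; rewrite -q_eval.
by move=> f M fd M0 fM; rewrite -qx // (dual_extendE _ fd); apply: Bq.
Qed.

Lemma bounded_rel_weakly_compact (A : set V) (r : R) : reflexive_space V ->
  (forall x, A x -> `|x| <= r) -> rel_weakly_compact A.
Proof.
move=> reflV Ar; apply: (subclosed_compact _ (bidual_ball_weakly_compact (r := r) reflV)).
  exact: closed_closure.
apply: closure_sub_closed; first exact: bidual_ball_weakly_closed.
by move=> x /Ar; apply: bidual_ball_norm.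
Qed.

End WeakTopology.

(** * Dedekind completeness of reflexive Banach lattices *)

Lemma cluster_sub_closed {T : topologicalType} (F : set_system T) (A C : set T) q :
  cluster F q -> F A -> closed C -> A `<=` C -> C q.
Proof. by rewrite clusterE => Fq FA cC AsubC; apply: closure_sub_closed cC AsubC _ (Fq A FA). Qed.

Section DedekindComplete.
Context {R : realType} {V : completeNormedModType R} (L : banach_lattice V).
Local Notation "x ⊑ y" := (bl_le L x y) (at level 70).
Local Notation "x ⊔ y" := (bl_join L x y) (at level 50).

Lemma bl_ge0_dual w :
  (forall f, is_dual_elt f -> (forall x, 0 ⊑ x -> 0 <= f x) -> 0 <= f w) -> 0 ⊑ w.
Proof.
(* If w were not positive, Hahn-Banach for the sublinear x |-> ||x^+|| would give
   a positive functional f <= ||.^+|| with f (- w) = ||(- w)^+|| > 0. *)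
move=> H; apply/not_notP => w_ge0.
pose p x := `|bl_pos L x|.
have p_subadd x y : p (x + y) <= p x + p y.
  by apply: le_trans (ler_normD _ _); apply: bl_norm_le; [exact: bl_pos_ge0|exact: bl_posD_le].
have p_posZ (a : R) x : 0 <= a -> p (a *: x) = a * p x.
  by move=> a0; rewrite /p bl_posZ // normrZ ger0_norm.
have c_gt0 : 0 < p (- w).
  by rewrite normr_gt0; apply: contra_notN w_ge0 => /eqP/bl_neg_eq0.
have hc t : t * p (- w) <= p (t *: - w).
  have [t0|t0] := leP 0 t; first by rewrite p_posZ.
  by rewrite (le_trans _ (normr_ge0 _)) // nmulr_rle0 // ltW.
have [f [fD fZ fp fw]] := hahn_banach_point p_subadd p_posZ hc.
have fN x : f (- x) = - f x by rewrite -scaleN1r fZ mulN1r.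
have f_le x : `|f x| <= 1 * `|x|.
  rewrite mul1r ler_norml lerNl -fN !(le_trans (fp _)) //.
    exact: norm_bl_pos_le.
  by rewrite -(normrN x); apply: norm_bl_pos_le.
have f_pos x : 0 ⊑ x -> 0 <= f x.
  move=> x0; rewrite -oppr_le0 -fN (le_trans (fp _)) // /p /bl_pos bl_join_r ?normr0 //.
  by rewrite -oppr0 bl_leN2.
have := H f (bounded_dual_elt fD fZ f_le) f_pos.
by rewrite -[w]opprK fN fw oppr_ge0 leNgt c_gt0.
Qed.

Lemma bl_le_dual x y : x ⊑ y <->
  forall f, is_dual_elt f -> (forall z, 0 ⊑ z -> 0 <= f z) -> f x <= f y.
Proof.
split=> [xy f fd f_pos|H]; last first.
  by apply/bl_subr_ge0/bl_ge0_dual => f fd f_pos; rewrite dual_eltB // subr_ge0 H.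
by rewrite -subr_ge0 -dual_eltB // f_pos // bl_subr_ge0.
Qed.

Lemma bl_ge_weakly_closed a : closed ([set x | a ⊑ x] : set (@weakV R V)).
Proof.
pose P := [set f | is_dual_elt f /\ forall z, 0 ⊑ z -> 0 <= f z].
have -> : [set x | a ⊑ x] = \bigcap_(f in P) [set x : weakV | f a <= f x].
  apply/seteqP; split=> x /= => [/bl_le_dual H f [fd f_pos]|H]; first exact: H.
  by apply/bl_le_dual => f fd f_pos; apply: H.
apply: closed_bigI => f [fd _]; apply: closed_fun_le; first exact: cst_continuous.
exact: weak_continuous_dual_elt.
Qed.

Lemma bl_le_weakly_closed u : closed ([set x | x ⊑ u] : set (@weakV R V)).
Proof.
pose P := [set f | is_dual_elt f /\ forall z, 0 ⊑ z -> 0 <= f z].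
have -> : [set x | x ⊑ u] = \bigcap_(f in P) [set x : weakV | f x <= f u].
  apply/seteqP; split=> x /= => [/bl_le_dual H f [fd f_pos]|H]; first exact: H.
  by apply/bl_le_dual => f fd f_pos; apply: H.
apply: closed_bigI => f [fd _]; apply: closed_fun_le; last exact: cst_continuous.
exact: weak_continuous_dual_elt.
Qed.

Definition bl_is_sup (A : set V) z :=
  (forall a, A a -> a ⊑ z) /\ forall u, (forall a, A a -> a ⊑ u) -> z ⊑ u.

Definition bl_dedekind_complete := forall (A : set V) a0 u0,
  A a0 -> (forall a, A a -> a ⊑ u0) -> exists z, bl_is_sup A z.

Definition join_closure (A : set V) : set V := [set x | forall S : set V,
  A `<=` S -> (forall y z, S y -> S z -> S (y ⊔ z)) -> S x].

Lemma sub_join_closure A : A `<=` join_closure A.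
Proof. by move=> x Ax S AS _; apply: AS. Qed.

Lemma join_closure_join A x y :
  join_closure A x -> join_closure A y -> join_closure A (x ⊔ y).
Proof. by move=> Ax Ay S AS S_join; apply: (S_join); [apply: Ax|apply: Ay]. Qed.

Lemma join_closure_ub A u : (forall a, A a -> a ⊑ u) -> forall x, join_closure A x -> x ⊑ u.
Proof. by move=> Au x /(_ [set y | y ⊑ u]); apply=> // y z; apply: bl_join_lub. Qed.

Theorem reflexive_bl_dedekind_complete : reflexive_space V -> bl_dedekind_complete.
Proof.
move=> reflV A a0 u0 Aa0 Au0; pose D := join_closure A.
pose above d := [set d' | D d' /\ d ⊑ d'].
pose G := filter_from D above.
have G_proper : ProperFilter G.
  apply: filter_from_proper; last by move=> d Dd; exists d.
  apply: filter_from_filter; first by exists a0; apply: sub_join_closure.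
  move=> i j Di Dj; exists (i ⊔ j); first exact: join_closure_join.
  by move=> d [Dd ijd]; do 2 split=> //; apply: bl_le_trans ijd.
have G_ball : G (bidual_ball `|bl_abs L a0 + bl_abs L u0|).
  exists a0; first exact: sub_join_closure.
  by move=> d [Dd a0d]; apply/bidual_ball_norm/bl_norm_interval_le/(join_closure_ub Au0).
have [z [_ Gz]] := bidual_ball_weakly_compact reflV G_proper G_ball.
exists z; split=> [a Aa|u Au].
- apply: (@cluster_sub_closed (@weakV R V) G (above a) [set x | a ⊑ x] z Gz).
  + by exists a; first exact: sub_join_closure.
  + exact: bl_ge_weakly_closed.
  + by move=> d [].
- apply: (@cluster_sub_closed (@weakV R V) G (above a0) [set x | x ⊑ u] z Gz).
  + by exists a0; first exact: sub_join_closure.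
  + exact: bl_le_weakly_closed.
  + by move=> d [Dd _]; apply: join_closure_ub Au _ Dd.
Qed.

End DedekindComplete.

(** * Positive maps are bounded *)

Section PositiveMaps.
Context {R : realType} {E F : completeNormedModType R}.
Variables (LE : banach_lattice E) (LF : banach_lattice F).
Local Notation "x ⊑ y" := (bl_le LE x y) (at level 70).
Local Notation "x ≼ y" := (bl_le LF x y) (at level 70).

Lemma bl_series_ge_term (y : nat -> E) : cvgn [normed series y] ->
  (forall n, 0 ⊑ y n) -> forall N, y N ⊑ limn (series y).
Proof.
move=> /normed_cvg y_cvg y_ge0 N.
have series_ge0 n : 0 ⊑ series y n.
  elim: n => [|n IHn]; last by rewrite seriesSr; apply: bl_addr_ge0.
  by rewrite /series /= big_geq.
have series_ge n : (N < n)%N -> y N ⊑ series y n.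
  elim: n => // n IHn; rewrite ltnS leq_eqVlt => /predU1P[->|Nn]; rewrite seriesSr.
    by rewrite -[X in X ⊑ _]add0r; apply: bl_leD.
  by rewrite -[X in X ⊑ _]addr0; apply: bl_leD; [apply: IHn|apply: y_ge0].
apply: (closed_cvg _ (@bl_ge_closed _ _ LE (y N)) _ _ y_cvg).
by near=> n; apply: series_ge; near: n; apply: nbhs_infty_gt.
Unshelve. all: by end_near.
Qed.

Lemma positive_linear_order_bounded (S : {linear E -> F}) :
  (forall x, 0 ⊑ x -> 0 ≼ S x) -> order_bounded LE LF S.
Proof.
move=> S_pos a b; exists (S a), (S b) => x ax xb.
by split; apply/bl_subr_ge0; rewrite -linearB; apply/S_pos/bl_subr_ge0.
Qed.

Variable P : E -> F.
Hypothesis PD : forall x y, 0 ⊑ x -> 0 ⊑ y -> P (x + y) = P x + P y.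
Hypothesis PZ : forall (a : R) x, 0 <= a -> 0 ⊑ x -> P (a *: x) = a *: P x.
Hypothesis P_ge0 : forall x, 0 ⊑ x -> 0 ≼ P x.

Lemma pos_map_mono x y : 0 ⊑ x -> x ⊑ y -> P x ≼ P y.
Proof.
move=> x0 /bl_subr_ge0 yx0; rewrite -(subrK x y) addrC PD //.
by rewrite -[X in X ≼ _]addr0; apply: bl_leD => //; apply: P_ge0.
Qed.

Lemma pos_map_bounded : exists M, forall x, 0 ⊑ x -> `|x| <= 1 -> `|P x| <= M.
Proof.
(* Otherwise pick x_n >= 0 in the unit ball with ||P x_n|| > 2^n n; the sum s of
   the 2^-n x_n dominates each term, so ||P s|| > n for every n. *)
apply/not_notP => unbounded.
have big (M : R) : exists x, [/\ 0 ⊑ x, `|x| <= 1 & M < `|P x|].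
  apply/not_notP => nx; apply: unbounded; exists M => x x0 x1.
  by rewrite leNgt; apply/negP => Mx; apply: nx; exists x.
pose w : R := 2^-1; have w_gt0 : 0 < w by rewrite invr_gt0.
have w_lt1 : w < 1 by rewrite invf_lt1 // ltr1n.
have wn_gt0 n : 0 < w ^+ n by rewrite exprn_gt0.
pose x n := projT1 (cid (big (w ^- n * n%:R))).
have [x_ge0 x_le1 Px_gt] : [/\ forall n, 0 ⊑ x n, forall n, `|x n| <= 1 &
    forall n, w ^- n * n%:R < `|P (x n)|].
  by split=> n; case: (projT2 (cid (big (w ^- n * n%:R)))).
pose y n := w ^+ n *: x n.
have y_ge0 n : 0 ⊑ y n by apply: bl_le_scale; [apply: ltW|apply: x_ge0].
have y_cvg : cvgn [normed series y].
  apply: (@series_le_cvg _ _ (geometric 1 w)) => [n|n|n|] /=.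
  - by [].
  - by rewrite mul1r ltW.
  - rewrite /y normrZ ger0_norm ?mul1r; last exact: ltW.
    by apply: ler_piMr; [apply: ltW|apply: x_le1].
  - by apply: is_cvg_geometric_series; rewrite ger0_norm ?ltW.
have P_lim_gt N : N%:R < `|P (limn (series y))|.
  apply: lt_le_trans (bl_norm_le (P_ge0 (y_ge0 N)) (pos_map_mono (y_ge0 N) _)).
    by rewrite /y PZ ?ltW // normrZ ger0_norm ?ltW // -ltr_pdivrMl // mulrC.
  exact: bl_series_ge_term.
by have := P_lim_gt (Num.truncn `|P (limn (series y))|).+1; rewrite ltNge ltW ?truncnS_gt.
Qed.

End PositiveMaps.

(** * The Riesz-Kantorovich modulus *)

Section RieszKantorovich.
Context {R : realType} {E F : completeNormedModType R}.
Variables (LE : banach_lattice E) (LF : banach_lattice F).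
Local Notation "x ⊑ y" := (bl_le LE x y) (at level 70).
Local Notation "x ≼ y" := (bl_le LF x y) (at level 70).
Hypothesis F_dedekind : bl_dedekind_complete LF.
Variable T : {linear E -> F}.
Hypothesis T_ob : order_bounded LE LF T.

Definition image_interval x := [set T y | y in [set y | 0 ⊑ y /\ y ⊑ x]].

(* T^+ x = sup T[0, x] on the positive cone (junk value 0 when there is no sup). *)
Definition Tsup x : F :=
  if pselect (exists z, bl_is_sup LF (image_interval x) z) is left h then projT1 (cid h) else 0.

Lemma Tsup_is_sup x : 0 ⊑ x -> bl_is_sup LF (image_interval x) (Tsup x).
Proof.
move=> x0; rewrite /Tsup; case: pselect => [h|no_sup]; first by case: (cid h).
exfalso; apply: no_sup; have [c [d Tcd]] := T_ob 0 x.
apply: (F_dedekind (a0 := 0) (u0 := d)); first by exists 0; rewrite ?raddf0.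
by move=> _ [y [y0 yx] <-]; case: (Tcd y y0 yx).
Qed.

Lemma Tsup_ub x y : 0 ⊑ y -> y ⊑ x -> T y ≼ Tsup x.
Proof.
by move=> y0 yx; apply: (Tsup_is_sup (bl_le_trans y0 yx)).1; exists y.
Qed.

Lemma Tsup_least x u : 0 ⊑ x -> (forall y, 0 ⊑ y -> y ⊑ x -> T y ≼ u) -> Tsup x ≼ u.
Proof. by move=> x0 Tu; apply: (Tsup_is_sup x0).2 => _ [y [y0 yx] <-]; apply: Tu. Qed.

Lemma Tsup_ge0 x : 0 ⊑ x -> 0 ≼ Tsup x.
Proof. by move=> x0; rewrite -(raddf0 T); apply: Tsup_ub. Qed.

Lemma Tsup0 : Tsup 0 = 0.
Proof.
apply: bl_le_anti; last exact/Tsup_ge0/bl_le_refl.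
by apply: Tsup_least => // y y0 y_le0; rewrite (bl_le_anti y_le0 y0) raddf0.
Qed.

Lemma TsupD x1 x2 : 0 ⊑ x1 -> 0 ⊑ x2 -> Tsup (x1 + x2) = Tsup x1 + Tsup x2.
Proof.
move=> x10 x20; have x0 := bl_addr_ge0 x10 x20; apply: bl_le_anti.
  apply: Tsup_least => // y y0 yx.
  have [y1 [y2 [-> y10 y1x y20 y2x]]] := bl_riesz_decomposition x10 x20 y0 yx.
  by rewrite linearD; apply: bl_leD; apply: Tsup_ub.
have Tsup1_le y2 : 0 ⊑ y2 -> y2 ⊑ x2 -> Tsup x1 ≼ Tsup (x1 + x2) - T y2.
  move=> y20 y2x; apply: Tsup_least => // y1 y10 y1x; apply/bl_lerBrDr.
  by rewrite -linearD; apply: Tsup_ub; [apply: bl_addr_ge0|apply: bl_leD].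
rewrite addrC -bl_lerBrDr; apply: Tsup_least => // y2 y20 y2x.
by rewrite bl_lerBrDr addrC -bl_lerBrDr; apply: Tsup1_le.
Qed.

Lemma TsupZ_le (b : R) x : 0 < b -> 0 ⊑ x -> Tsup (b *: x) ≼ b *: Tsup x.
Proof.
move=> b_gt0 x0; have b_neq0 : b != 0 by rewrite gt_eqF.
have bi_ge0 : 0 <= b^-1 by rewrite invr_ge0 ltW.
apply: Tsup_least => [|y y0 ybx]; first by apply: bl_le_scale; rewrite ?ltW.
rewrite -(scalerKV b_neq0 y) linearZ; apply: bl_leZ2l; first exact: ltW.
apply: Tsup_ub; first exact: bl_le_scale.
by rewrite -(scalerK b_neq0 x); apply: bl_leZ2l.
Qed.

Lemma TsupZ (a : R) x : 0 <= a -> 0 ⊑ x -> Tsup (a *: x) = a *: Tsup x.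
Proof.
rewrite le_eqVlt => /predU1P[<- _|a_gt0 x0]; first by rewrite !scale0r Tsup0.
have a_neq0 : a != 0 by rewrite gt_eqF.
apply: bl_le_anti; first exact: TsupZ_le.
have ai_gt0 : 0 < a^-1 by rewrite invr_gt0.
have := TsupZ_le ai_gt0 (bl_le_scale (ltW a_gt0) x0); rewrite scalerK //.
by move/(bl_leZ2l (ltW a_gt0)); rewrite scalerKV.
Qed.

Definition Tpos x := Tsup (bl_pos LE x) - Tsup (bl_neg LE x).

Lemma Tpos_sub a b : 0 ⊑ a -> 0 ⊑ b -> Tpos (a - b) = Tsup a - Tsup b.
Proof.
move=> a0 b0; have : bl_pos LE (a - b) + b = a + bl_neg LE (a - b).
  by rewrite -[bl_pos LE _](subrK (bl_neg LE (a - b))) bl_pos_sub_neg addrAC subrK.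
move/(congr1 Tsup); rewrite !TsupD // => e.
by rewrite /Tpos -[Tsup (bl_pos LE _)](addrK (Tsup b)) e addrAC addrK.
Qed.

Lemma Tpos_cone x : 0 ⊑ x -> Tpos x = Tsup x.
Proof. by move=> x0; rewrite -[x]subr0 Tpos_sub ?Tsup0 ?subr0. Qed.

Lemma Tpos_linear : linear Tpos.
Proof.
have TposD x y : Tpos (x + y) = Tpos x + Tpos y.
  have [px py] := (bl_pos_ge0 LE x, bl_pos_ge0 LE y).
  have [nx ny] := (bl_neg_ge0 LE x, bl_neg_ge0 LE y).
  rewrite -{1}(bl_pos_sub_neg LE x) -{1}(bl_pos_sub_neg LE y) addrACA -opprD.
  have [pxy nxy] := (bl_addr_ge0 px py, bl_addr_ge0 nx ny).
  by rewrite Tpos_sub // !TsupD // opprD addrACA.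
move=> a x y; rewrite TposD; congr (_ + _).
have [px nx] := (bl_pos_ge0 LE x, bl_neg_ge0 LE x).
have [a_ge0|a_lt0] := leP 0 a.
  have [apx anx] := (bl_le_scale a_ge0 px, bl_le_scale a_ge0 nx).
  by rewrite -{1}(bl_pos_sub_neg LE x) scalerBr Tpos_sub // !TsupZ // -scalerBr.
have na_ge0 : 0 <= - a by rewrite oppr_ge0 ltW.
have [apx anx] := (bl_le_scale na_ge0 px, bl_le_scale na_ge0 nx).
rewrite -{1}(bl_pos_sub_neg LE x) -opprB scalerN -scaleNr scalerBr Tpos_sub //.
by rewrite !TsupZ // -scalerBr scaleNr -scalerN opprB.
Qed.

Definition Tmod x := Tpos x + Tpos x - T x.

Lemma Tmod_linear : linear Tmod.
Proof.
move=> a x y; rewrite /Tmod !Tpos_linear linearP.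
move: (Tpos x) (Tpos y) (T x) (T y) => p q t u.
by rewrite scalerBr scalerDr opprD [_ + (a *: p + q)]addrACA [LHS]addrACA.
Qed.

Definition Tmod_lin : {linear E -> F} :=
  HB.pack Tmod (GRing.isLinear.Build R E F *:%R Tmod Tmod_linear).

Lemma Tmod_cone x : 0 ⊑ x -> Tmod x = Tsup x + Tsup x - T x.
Proof. by move=> x0; rewrite /Tmod Tpos_cone. Qed.

Lemma Tmod_ge x : 0 ⊑ x -> T x ≼ Tmod x.
Proof.
by move=> x0; rewrite Tmod_cone // bl_lerBrDr; apply: bl_leD; apply: Tsup_ub.
Qed.

Lemma Tmod_geN x : 0 ⊑ x -> - T x ≼ Tmod x.
Proof.
move=> x0; rewrite Tmod_cone // -[X in X ≼ _]add0r; apply/bl_leD2r.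
by apply: bl_addr_ge0; apply: Tsup_ge0.
Qed.

Lemma Tmod_least (U : {linear E -> F}) :
  op_le LE LF T U -> op_le LE LF (fun x => - T x) U -> op_le LE LF Tmod U.
Proof.
move=> TU NTU x x0; rewrite Tmod_cone // bl_lerBlDr -bl_le_half.
apply: Tsup_least => // y y0 /bl_subr_ge0 xy0; apply/bl_le_half.
have xE : x = y + (x - y) by rewrite addrC subrK.
rewrite {1 2}xE (linearD U) (linearD T) -[X in X ≼ _]addr0 -(addNr (T (x - y))) addrACA.
apply: bl_leD; last exact: bl_le_refl.
by apply: bl_leD; [apply: TU|exact: NTU].
Qed.

Lemma Tmod_is_modulus : is_modulus LE LF T Tmod_lin.
Proof.
split; [exact: Tmod_ge|exact: Tmod_geN| |by move=> U _; apply: Tmod_least].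
apply: positive_linear_order_bounded => x x0; rewrite /= Tmod_cone // -addrA.
by apply: bl_addr_ge0; [apply: Tsup_ge0|apply/bl_subr_ge0/Tsup_ub].
Qed.

Lemma Tmod_bounded : continuous T -> exists r, forall x, `|x| <= 1 -> `|Tmod x| <= r.
Proof.
move=> Tc; have [M HM] := pos_map_bounded TsupD TsupZ Tsup_ge0.
have [k k_gt0 Tk] : exists2 k, 0 < k & forall x, `|T x| <= k * `|x|.
  by move/linear_bounded_continuous/linear_boundedP : Tc => /pinfty_ex_gt0.
have Tpos_le x : `|x| <= 1 -> `|Tpos x| <= M + M.
  move=> x1; rewrite (le_trans (ler_normB _ _)) // lerD // HM //.
  - exact: le_trans (norm_bl_pos_le _ _) x1.
  - exact: le_trans (norm_bl_neg_le _ _) x1.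
exists (M + M + (M + M) + k) => x x1.
rewrite /Tmod (le_trans (ler_normB _ _)) // lerD //.
  by rewrite (le_trans (ler_normD _ _)) // lerD ?Tpos_le.
exact: le_trans (Tk x) (ler_piMr (ltW k_gt0) x1).
Qed.

End RieszKantorovich.

Theorem theorem2p13 (R : realType) (E F : completeNormedModType R)
  (LE : banach_lattice E) (LF : banach_lattice F) :
  AL_space LE -> reflexive_space F ->
  forall T : {linear E -> F}, continuous T ->
    order_bounded LE LF T -> seq_uaw_compact LE LF T ->
    exists S : {linear E -> F}, is_modulus LE LF T S /\ weakly_compact_op S.
Proof.
move=> _ reflF T Tc T_ob _.
have F_dedekind := reflexive_bl_dedekind_complete (L := LF) reflF.
exists (Tmod_lin F_dedekind T_ob); split; first exact: Tmod_is_modulus.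
have [r Tr] := Tmod_bounded F_dedekind T_ob Tc.
by apply: (bounded_rel_weakly_compact (r := r) reflF) => _ [x x1 <-]; apply: Tr.
Qed.
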